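(* If $g\in\mathcal{G}_0^0\cup\mathcal{G}_0^{sh}$, then for every finite measurable partition $\mathcal{P}$ the limit $\lim_{n\to\infty}\frac1nH(g,\mathcal{P}_n)$ exists and equals $h(g,\mathcal{P})$.
   Context: $\mathcal{G}_0$ is the set of concave functions $g:[0,1]\to\mathbb{R}$ with $g(0)=\lim_{x\to0^+}g(x)=0$. Let $\eta(x)=-x\log x$ and $\eta(0)=0$. Define $\mathcal{G}_0^0=\{g\in\mathcal{G}_0:\lim_{x\to0^+}g(x)/\eta(x)=0\}$ and $\mathcal{G}_0^{sh}=\{g\in\mathcal{G}_0:0<\lim_{x\to0^+}g(x)/\eta(x)<\infty\}$. $T$ is a measure-preserving map of a probability space $(X,\Sigma,\mu)$. For a finite measurable partition $\mathcal{P}$, let $\mathcal{P}_n=\bigvee_{i=0}^{n-1}T^{-i}\mathcal{P}$, $H(g,\mathcal{P})=\sum_{A\in\mathcal{P}}g(\mu(A))$, and $h(g,\mathcal{P})=\limsup_{n\to\infty}\frac1nH(g,\mathcal{P}_n)$. *)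

From Stdlib Require Import Reals List.
Import ListNotations.
Open Scope R_scope.

Definition set (X : Type) := X -> Prop.

Definition sigma_algebra {X : Type} (S : set X -> Prop) : Prop :=
  S (fun _ => True) /\
  (forall A, S A -> S (fun x => ~ A x)) /\
  (forall A : nat -> set X, (forall n, S (A n)) -> S (fun x => exists n, A n x)).

Definition pairwise_disjoint_seq {X : Type} (A : nat -> set X) : Prop :=
  forall i j x, i <> j -> A i x -> A j x -> False.

Definition probability_space {X : Type} (S : set X -> Prop) (mu : set X -> R) : Prop :=
  sigma_algebra S /\
  (forall A, S A -> 0 <= mu A) /\
  mu (fun _ => False) = 0 /\
  (forall A : nat -> set X, (forall n, S (A n)) -> pairwise_disjoint_seq A ->
     infinite_sum (fun n => mu (A n)) (mu (fun x => exists n, A n x))) /\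
  mu (fun _ => True) = 1.

Definition preimage {X : Type} (T : X -> X) (A : set X) : set X := fun x => A (T x).

Definition measure_preserving {X : Type} (S : set X -> Prop) (mu : set X -> R)
  (T : X -> X) : Prop :=
  forall A, S A -> S (preimage T A) /\ mu (preimage T A) = mu A.

Definition finite_measurable_partition {X : Type} (S : set X -> Prop)
  (P : list (set X)) : Prop :=
  (forall A, In A P -> S A) /\
  (forall i j x, (i < length P)%nat -> (j < length P)%nat -> i <> j ->
     nth i P (fun _ => False) x -> nth j P (fun _ => False) x -> False) /\
  (forall x, exists A, In A P /\ A x).

Definition refine {X : Type} (P Q : list (set X)) : list (set X) :=
  flat_map (fun A => map (fun B => fun x => A x /\ B x) Q) P.

Fixpoint iter_map {X : Type} (n : nat) (T : X -> X) : X -> X :=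
  match n with O => fun x => x | S k => fun x => T (iter_map k T x) end.

(** P_n = \/_{i=0}^{n-1} T^{-i} P  (P_0 is the trivial partition) *)
Fixpoint join_part {X : Type} (T : X -> X) (P : list (set X)) (n : nat) : list (set X) :=
  match n with
  | O => [fun _ => True]
  | S k => refine (join_part T P k) (map (preimage (iter_map k T)) P)
  end.

Definition Hg {X : Type} (mu : set X -> R) (g : R -> R) (P : list (set X)) : R :=
  fold_right Rplus 0 (map (fun A => g (mu A)) P).

Definition eta (x : R) : R := if Req_EM_T x 0 then 0 else - x * ln x.

Definition concave_on_01 (g : R -> R) : Prop :=
  forall x y t, 0 <= x <= 1 -> 0 <= y <= 1 -> 0 <= t <= 1 ->
    t * g x + (1 - t) * g y <= g (t * x + (1 - t) * y).

Definition G0 (g : R -> R) : Prop :=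
  concave_on_01 g /\ g 0 = 0 /\
  (forall eps, 0 < eps -> exists delta, 0 < delta /\
     forall x, 0 < x < delta -> Rabs (g x) < eps).

Definition ratio_limit_at_0 (g : R -> R) (l : R) : Prop :=
  forall eps, 0 < eps -> exists delta, 0 < delta /\
    forall x, 0 < x < delta -> x < 1 -> Rabs (g x / eta x - l) < eps.

Definition G0_0 (g : R -> R) : Prop := G0 g /\ ratio_limit_at_0 g 0.

Definition G0_sh (g : R -> R) : Prop :=
  G0 g /\ exists c, 0 < c /\ ratio_limit_at_0 g c.

Definition is_limsup (u : nat -> R) (l : R) : Prop :=
  forall eps, 0 < eps ->
    (exists N, forall n, (N <= n)%nat -> u n < l + eps) /\
    (forall N, exists n, (N <= n)%nat /\ l - eps < u n).

(** Let [a n = H(eta, P_n)] be the Shannon entropy of the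
    iterated join [P_n].  Since [P_{m+n} = P_m \/ T^{-m} P_n] and [T] preserves
    [mu], subadditivity of Shannon entropy (Gibbs' inequality) gives
    [a (m+n) <= a m + a n], so by Fekete's lemma [a n / n] converges to some
    [L].  If [g(x) / eta(x) -> c] as [x -> 0+] (with [c = 0] or [c > 0]), then
    for every [eps > 0] there is [K] with [|g x - c eta x| <= eps eta x + K x]
    on [[0,1]]; summing over the pieces of [P_n], whose masses add up to 1,
    gives [|H(g, P_n) - c a n| <= eps a n + K].  Dividing by [n] yields
    [H(g, P_n) / n -> c L], and a limit is also the limit superior. *)

From Stdlib Require Import Reals List Lra Lia FunctionalExtensionality PropExtensionality Classical.
Import ListNotations.
Open Scope R_scope.

Definition sumL {A : Type} (l : list A) (f : A -> R) : R := fold_right Rplus 0 (map f l).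

Lemma sumL_zero {A : Type} (l : list A) : sumL l (fun _ => 0) = 0.
Proof. induction l as [|a l IH]; [reflexivity|]. unfold sumL in *; simpl. rewrite IH; ring. Qed.

Lemma sumL_nil {A : Type} (f : A -> R) : sumL [] f = 0.
Proof. reflexivity. Qed.

Lemma sumL_cons {A : Type} a l (f : A -> R) : sumL (a :: l) f = f a + sumL l f.
Proof. reflexivity. Qed.

Lemma sumL_app {A : Type} l1 l2 (f : A -> R) : sumL (l1 ++ l2) f = sumL l1 f + sumL l2 f.
Proof.
  induction l1 as [|a l1 IH]; simpl app.
  - rewrite sumL_nil; ring.
  - rewrite !sumL_cons, IH; ring.
Qed.

Lemma sumL_map {A B : Type} (h : B -> A) l (f : A -> R) : sumL (map h l) f = sumL l (fun x => f (h x)).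
Proof. unfold sumL. rewrite map_map. reflexivity. Qed.

Lemma sumL_ext {A : Type} l (f h : A -> R) : (forall x, In x l -> f x = h x) -> sumL l f = sumL l h.
Proof.
  induction l as [|a l IH]; intros H; [reflexivity|].
  rewrite !sumL_cons, H by (simpl; auto).
  rewrite IH by (intros; apply H; simpl; auto). reflexivity.
Qed.

Lemma sumL_le {A : Type} l (f h : A -> R) : (forall x, In x l -> f x <= h x) -> sumL l f <= sumL l h.
Proof.
  induction l as [|a l IH]; intros H; [rewrite !sumL_nil; lra|].
  rewrite !sumL_cons.
  apply Rplus_le_compat; [apply H; simpl; auto | apply IH; intros; apply H; simpl; auto].
Qed.

Lemma sumL_plus {A : Type} l (f h : A -> R) : sumL l (fun x => f x + h x) = sumL l f + sumL l h.
Proof. induction l as [|a l IH]; [rewrite !sumL_nil; ring|]. rewrite !sumL_cons, IH; ring. Qed.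

Lemma sumL_minus {A : Type} l (f h : A -> R) : sumL l (fun x => f x - h x) = sumL l f - sumL l h.
Proof. induction l as [|a l IH]; [rewrite !sumL_nil; ring|]. rewrite !sumL_cons, IH; ring. Qed.

Lemma sumL_scal {A : Type} l (c : R) (f : A -> R) : sumL l (fun x => c * f x) = c * sumL l f.
Proof. induction l as [|a l IH]; [rewrite !sumL_nil; ring|]. rewrite !sumL_cons, IH; ring. Qed.

Lemma sumL_swap {A B : Type} (l1 : list A) (l2 : list B) (F : A -> B -> R) :
  sumL l1 (fun x => sumL l2 (F x)) = sumL l2 (fun y => sumL l1 (fun x => F x y)).
Proof.
  induction l1 as [|a l1 IH].
  - rewrite sumL_nil, (sumL_ext l2 _ (fun _ => 0)) by (intros; reflexivity).
    symmetry; apply sumL_zero.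
  - rewrite sumL_cons, IH, <- sumL_plus. apply sumL_ext; intros. rewrite sumL_cons; ring.
Qed.

Lemma sumL_nonneg {A : Type} l (f : A -> R) : (forall x, In x l -> 0 <= f x) -> 0 <= sumL l f.
Proof. intros H. rewrite <- (sumL_zero l). apply sumL_le; auto. Qed.

Lemma sumL_term_le {A : Type} l (f : A -> R) x :
  (forall y, In y l -> 0 <= f y) -> In x l -> f x <= sumL l f.
Proof.
  induction l as [|a l IH]; intros H Hx; [destruct Hx|]. rewrite sumL_cons.
  assert (0 <= f a) by (apply H; simpl; auto).
  assert (0 <= sumL l f) by (apply sumL_nonneg; intros; apply H; simpl; auto).
  destruct Hx as [->|Hx]; [lra|].
  assert (f x <= sumL l f) by (apply IH; auto; intros; apply H; simpl; auto). lra.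
Qed.

Lemma sumL_abs {A : Type} l (f : A -> R) : Rabs (sumL l f) <= sumL l (fun x => Rabs (f x)).
Proof.
  induction l as [|a l IH]; [rewrite !sumL_nil, Rabs_R0; lra|]. rewrite !sumL_cons.
  eapply Rle_trans; [apply Rabs_triang|]. lra.
Qed.

Lemma Hg_sumL {X : Type} (mu : set X -> R) g Q : Hg mu g Q = sumL Q (fun A => g (mu A)).
Proof. reflexivity. Qed.

Lemma set_ext {X : Type} (A B : set X) : (forall x, A x <-> B x) -> A = B.
Proof.
  intros H. apply functional_extensionality; intros x.
  apply propositional_extensionality; auto.
Qed.

Definition inter {X : Type} (A B : set X) : set X := fun x => A x /\ B x.

Lemma sumL_refine {X : Type} (Q Q' : list (set X)) (F : set X -> R) :
  sumL (refine Q Q') F = sumL Q (fun A => sumL Q' (fun B => F (inter A B))).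
Proof.
  unfold refine. induction Q as [|A Q IH]; [reflexivity|].
  simpl flat_map. rewrite sumL_app, sumL_cons, IH, sumL_map. reflexivity.
Qed.

Section ProbabilitySpace.
Context {X : Type}.
Variables (S : set X -> Prop) (mu : set X -> R).
Hypothesis HP : probability_space S mu.

Lemma meas_True : S (fun _ => True).
Proof. destruct HP as [[H _] _]; exact H. Qed.

Lemma meas_compl A : S A -> S (fun x => ~ A x).
Proof. destruct HP as [[_ [H _]] _]; auto. Qed.

Lemma meas_False : S (fun _ => False).
Proof.
  replace (fun _ : X => False) with (fun _ : X => ~ True) by (apply set_ext; tauto).
  apply meas_compl, meas_True.
Qed.

(** The sequence [A, B, empty, empty, ...], used to derive finite
    statements from countable ones. *)
Definition pair_seq (A B : set X) (n : nat) : set X :=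
  match n with O => A | 1%nat => B | _ => fun _ => False end.

Lemma pair_seq_union A B : (fun x => exists n, pair_seq A B n x) = (fun x => A x \/ B x).
Proof.
  apply set_ext; intros x; split.
  - intros [[|[|n]] H]; simpl in H; tauto.
  - intros [H|H]; [exists 0%nat | exists 1%nat]; exact H.
Qed.

Lemma pair_seq_meas A B : S A -> S B -> forall n, S (pair_seq A B n).
Proof. intros HA HB [|[|n]]; simpl; auto using meas_False. Qed.

Lemma meas_union A B : S A -> S B -> S (fun x => A x \/ B x).
Proof.
  intros HA HB. rewrite <- pair_seq_union.
  destruct HP as [[_ [_ Hcup]] _]. apply Hcup, pair_seq_meas; auto.
Qed.

Lemma meas_inter A B : S A -> S B -> S (inter A B).
Proof.
  intros HA HB.
  replace (inter A B) with (fun x => ~ (fun y => ~ A y \/ ~ B y) x).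
  - apply meas_compl, meas_union; apply meas_compl; auto.
  - apply set_ext; intros x; unfold inter; split; [intros H; split; apply NNPP|]; tauto.
Qed.

Lemma mu_nonneg A : S A -> 0 <= mu A.
Proof. destruct HP as [_ [H _]]; auto. Qed.

Lemma mu_add A B : S A -> S B -> (forall x, A x -> B x -> False) ->
  mu (fun x => A x \/ B x) = mu A + mu B.
Proof.
  intros HA HB Hdisj. destruct HP as [_ [_ [Hmu0 [Hadd _]]]].
  assert (Hsum : infinite_sum (fun n => mu (pair_seq A B n))
                   (mu (fun x => exists n, pair_seq A B n x))).
  { apply Hadd; [apply pair_seq_meas; auto|].
    intros [|[|i]] [|[|j]] x Hij; simpl; try tauto; try congruence; eauto. }
  rewrite pair_seq_union in Hsum.
  eapply uniqueness_sum; [exact Hsum|]. intros eps Heps. exists 1%nat. intros n Hn.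
  assert (Hpartial : sum_f_R0 (fun n => mu (pair_seq A B n)) n = mu A + mu B).
  { induction n as [|n IH]; [lia|]. destruct n; [reflexivity|].
    simpl in IH |- *. rewrite IH by lia. rewrite Hmu0. ring. }
  unfold Rdist. rewrite Hpartial, Rminus_diag, Rabs_R0. exact Heps.
Qed.

Lemma mu_le1 A : S A -> mu A <= 1.
Proof.
  intros HA.
  pose proof (mu_add A (fun x => ~ A x) HA (meas_compl A HA) (fun x a b => b a)) as Hsplit.
  cbv beta in Hsplit.
  replace (fun x => A x \/ ~ A x) with (fun _ : X => True) in Hsplit
    by (apply set_ext; intros x; split; [intros _; apply classic | auto]).
  destruct HP as [_ [_ [_ [_ Hmu1]]]].
  pose proof (mu_nonneg _ (meas_compl A HA)). lra.
Qed.

Definition union_list (L : list (set X)) : set X := fun x => exists B, In B L /\ B x.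

Lemma meas_union_list L : (forall B, In B L -> S B) -> S (union_list L).
Proof.
  induction L as [|B0 L IH]; intros HL.
  - replace (union_list []) with (fun _ : X => False); [apply meas_False|].
    apply set_ext; intros x; unfold union_list; simpl; split; [tauto | intros [B [[] _]]].
  - replace (union_list (B0 :: L)) with (fun x => B0 x \/ union_list L x).
    + apply meas_union; [apply HL; simpl; auto | apply IH; intros; apply HL; simpl; auto].
    + apply set_ext; intros x; unfold union_list; simpl; split.
      * intros [H|[B [H1 H2]]]; eauto.
      * intros [B [[<-|H1] H2]]; eauto.
Qed.

Definition list_disjoint (L : list (set X)) : Prop :=
  forall i j x, (i < length L)%nat -> (j < length L)%nat -> i <> j ->
     nth i L (fun _ => False) x -> nth j L (fun _ => False) x -> False.

Lemma sumL_mu_inter L A : (forall B, In B L -> S B) -> list_disjoint L -> S A ->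
  sumL L (fun B => mu (inter A B)) = mu (inter A (union_list L)).
Proof.
  revert A. induction L as [|B0 L IH]; intros A HL HD HA.
  - rewrite sumL_nil. replace (inter A (union_list [])) with (fun _ : X => False).
    + destruct HP as [_ [_ [H _]]]; auto.
    + apply set_ext; intros x; unfold inter, union_list; simpl; split;
        [tauto | intros [_ [B [[] _]]]].
  - assert (HB0 : S B0) by (apply HL; simpl; auto).
    assert (HL' : forall B, In B L -> S B) by (intros; apply HL; simpl; auto).
    rewrite sumL_cons, IH; auto.
    2: { intros i j x Hi Hj Hij. apply (HD (Datatypes.S i) (Datatypes.S j) x); simpl; lia. }
    replace (inter A (union_list (B0 :: L)))
      with (fun x => inter A B0 x \/ inter A (union_list L) x).
    + symmetry. apply mu_add; auto using meas_inter, meas_union_list.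
      intros x [_ H1] [_ [B [HB H2]]].
      destruct (In_nth L B (fun _ => False) HB) as [j [Hj E]].
      apply (HD 0%nat (Datatypes.S j) x); simpl; try lia; auto. rewrite E; auto.
    + apply set_ext; intros x; unfold inter, union_list; simpl; split.
      * intros [[H1 H2]|[H1 [B [H2 H3]]]]; eauto.
      * intros [H1 [B [[<-|H2] H3]]]; eauto.
Qed.

(** This is the only property of partitions that entropy estimates use. *)
Definition splits_measure (Q : list (set X)) : Prop :=
  (forall B, In B Q -> S B) /\ forall A, S A -> sumL Q (fun B => mu (inter A B)) = mu A.

Lemma partition_splits_measure P : finite_measurable_partition S P -> splits_measure P.
Proof.
  intros [HM [HD HC]]. split; auto. intros A HA.
  rewrite sumL_mu_inter; auto. f_equal.
  apply set_ext; intros x; unfold inter, union_list; split; [tauto|]. intros; split; auto.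
Qed.

Lemma trivial_splits_measure : splits_measure [fun _ => True].
Proof.
  split.
  - intros B [<-|[]]. apply meas_True.
  - intros A HA. rewrite sumL_cons, sumL_nil.
    replace (inter A (fun _ => True)) with A by (apply set_ext; unfold inter; tauto). ring.
Qed.

Lemma refine_splits_measure Q Q' :
  splits_measure Q -> splits_measure Q' -> splits_measure (refine Q Q').
Proof.
  intros [HQ1 HQ2] [HR1 HR2]. split.
  - intros B HB. unfold refine in HB. apply in_flat_map in HB. destruct HB as [A [HA HB]].
    apply in_map_iff in HB. destruct HB as [C [<- HC]]. apply meas_inter; auto.
  - intros A HA. rewrite sumL_refine, <- HQ2 by auto. apply sumL_ext; intros B HB.
    rewrite <- HR2 by (apply meas_inter; auto). apply sumL_ext; intros C HC.
    f_equal. apply set_ext; unfold inter; tauto.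
Qed.

Lemma splits_measure_sum1 Q : splits_measure Q -> sumL Q mu = 1.
Proof.
  intros [_ HQ]. rewrite <- (proj2 (proj2 (proj2 (proj2 HP)))), <- (HQ _ meas_True).
  apply sumL_ext; intros B HB. f_equal. apply set_ext; unfold inter; tauto.
Qed.

Lemma splits_measure_mu01 Q : splits_measure Q -> forall B, In B Q -> 0 <= mu B <= 1.
Proof. intros [HQ _] B HB. split; [apply mu_nonneg | apply mu_le1]; auto. Qed.

End ProbabilitySpace.

Lemma iter_measure_preserving {X : Type} S (mu : set X -> R) T :
  measure_preserving S mu T -> forall k, measure_preserving S mu (iter_map k T).
Proof.
  intros HT k. induction k as [|k IH]; intros A HA; [split; auto|].
  change (preimage (iter_map (Datatypes.S k) T) A) with (preimage (iter_map k T) (preimage T A)).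
  destruct (HT A HA) as [H1 H2]. destruct (IH _ H1) as [H3 H4]. split; congruence.
Qed.

Lemma preimage_partition {X : Type} S (f : X -> X) P :
  (forall A, S A -> S (preimage f A)) ->
  finite_measurable_partition S P -> finite_measurable_partition S (map (preimage f) P).
Proof.
  intros Hf [HM [HD HC]]. split; [|split].
  - intros A HA. apply in_map_iff in HA. destruct HA as [B [<- HB]]. auto.
  - intros i j x Hi Hj Hij. rewrite length_map in Hi, Hj.
    change (fun _ : X => False) with (@preimage X f (fun _ : X => False)).
    rewrite !map_nth. apply (HD i j (f x)); auto.
  - intros x. destruct (HC (f x)) as [A [HA HAx]].
    exists (preimage f A). split; auto. apply in_map; auto.
Qed.

Lemma map_preimage_refine {X : Type} (f : X -> X) (Q Q' : list (set X)) :
  map (preimage f) (refine Q Q') = refine (map (preimage f) Q) (map (preimage f) Q').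
Proof.
  unfold refine. induction Q as [|A Q IH]; [reflexivity|].
  simpl flat_map. rewrite map_app. simpl map at 2. simpl flat_map.
  f_equal; [rewrite !map_map; reflexivity | exact IH].
Qed.

Lemma refine_assoc {X : Type} (Q Q' Q'' : list (set X)) :
  refine (refine Q Q') Q'' = refine Q (refine Q' Q'').
Proof.
  unfold refine. induction Q as [|A Q IH]; [reflexivity|]. simpl.
  rewrite flat_map_app, IH. f_equal. clear IH.
  induction Q' as [|B Q' IH]; [reflexivity|]. simpl. rewrite map_app, IH. f_equal.
  rewrite map_map. apply map_ext; intros C. apply set_ext; intros; tauto.
Qed.

Lemma refine_trivial {X : Type} (Q : list (set X)) : refine Q [fun _ => True] = Q.
Proof.
  unfold refine. induction Q as [|A Q IH]; [reflexivity|]. simpl. f_equal; [|exact IH].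
  apply set_ext; intros; tauto.
Qed.

Lemma iter_map_add {X : Type} (T : X -> X) m n x :
  iter_map n T (iter_map m T x) = iter_map (n + m) T x.
Proof. induction n; simpl; congruence. Qed.

Lemma map_preimage_id {X : Type} (T : X -> X) (L : list (set X)) :
  map (preimage (iter_map 0 T)) L = L.
Proof. induction L as [|A L IH]; [reflexivity|]. simpl. f_equal. exact IH. Qed.

Lemma join_part_add {X : Type} (T : X -> X) P m n :
  join_part T P (m + n) =
  refine (join_part T P m) (map (preimage (iter_map m T)) (join_part T P n)).
Proof.
  induction n as [|n IH].
  - rewrite Nat.add_0_r. symmetry. apply refine_trivial.
  - rewrite Nat.add_succ_r. simpl join_part.
    rewrite IH, map_preimage_refine, refine_assoc, map_map. do 2 f_equal.
    apply map_ext; intros B. unfold preimage.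
    apply set_ext; intros x. rewrite iter_map_add, Nat.add_comm. tauto.
Qed.

Lemma join_splits_measure {X : Type} S (mu : set X -> R) T P :
  probability_space S mu -> measure_preserving S mu T -> finite_measurable_partition S P ->
  forall n m, splits_measure S mu (map (preimage (iter_map m T)) (join_part T P n)).
Proof.
  intros HP HT HF n. induction n as [|n IH]; intros m.
  - apply trivial_splits_measure; auto.
  - simpl join_part. rewrite map_preimage_refine.
    apply refine_splits_measure; auto. apply partition_splits_measure; auto.
    assert (Hmeas : forall k A, S A -> S (preimage (iter_map k T) A))
      by (intros k A HA; exact (proj1 (iter_measure_preserving S mu T HT k A HA))).
    apply preimage_partition; auto. apply preimage_partition; auto.
Qed.

Lemma join_part_splits_measure {X : Type} S (mu : set X -> R) T P :
  probability_space S mu -> measure_preserving S mu T -> finite_measurable_partition S P ->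
  forall n, splits_measure S mu (join_part T P n).
Proof. intros HP HT HF n. rewrite <- (map_preimage_id T). apply join_splits_measure; auto. Qed.

Lemma eta_eq x : eta x = - x * ln x.
Proof. unfold eta. destruct (Req_EM_T x 0); [subst; ring | reflexivity]. Qed.

Lemma ln_le_sub1 y : 0 < y -> ln y <= y - 1.
Proof. intros Hy. pose proof (exp_ineq1_le (ln y)) as H. rewrite exp_ln in H; lra. Qed.

Lemma ln_neg x : 0 < x < 1 -> ln x < 0.
Proof. intros Hx. rewrite <- ln_1. apply ln_increasing; lra. Qed.

Lemma eta_nonneg x : 0 <= x <= 1 -> 0 <= eta x.
Proof.
  intros Hx. rewrite eta_eq.
  destruct (Req_dec x 0) as [->|Hx0]; [lra|].
  destruct (Req_dec x 1) as [->|Hx1]; [rewrite ln_1; lra|].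
  pose proof (ln_neg x ltac:(lra)). nra.
Qed.

Lemma eta_pos x : 0 < x < 1 -> 0 < eta x.
Proof. intros Hx. rewrite eta_eq. pose proof (ln_neg x Hx). nra. Qed.

Lemma eta_le1 x : 0 <= x <= 1 -> eta x <= 1.
Proof.
  intros Hx. rewrite eta_eq. destruct (Req_dec x 0) as [->|Hx0]; [lra|].
  assert (Hinv : 0 < / x) by (apply Rinv_0_lt_compat; lra).
  pose proof (ln_le_sub1 _ Hinv) as H. rewrite ln_Rinv in H by lra.
  assert (x * - ln x <= x * (/ x - 1)) by (apply Rmult_le_compat_l; lra).
  replace (x * (/ x - 1)) with (1 - x) in H0 by (field; lra). lra.
Qed.

(** Pointwise Gibbs inequality: for [0 <= q <= min(a, b)],
    [eta q <= - q ln a - q ln b + (a b - q)]; it follows from [ln y <= y - 1]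
    at [y = a b / q]. *)
Lemma eta_gibbs_pointwise q a b : 0 <= q -> q <= a -> q <= b ->
  eta q <= - q * ln a - q * ln b + (a * b - q).
Proof.
  intros Hq Ha Hb. rewrite eta_eq. destruct (Req_dec q 0) as [->|Hq0].
  - assert (0 <= a * b) by (apply Rmult_le_pos; lra). lra.
  - assert (Hy : 0 < a * b * / q)
      by (apply Rdiv_lt_0_compat; [apply Rmult_lt_0_compat|]; lra).
    pose proof (ln_le_sub1 _ Hy) as L.
    rewrite ln_mult, ln_mult, ln_Rinv in L; try lra;
      [| apply Rmult_lt_0_compat; lra | apply Rinv_0_lt_compat; lra].
    apply Rmult_le_compat_l with (r := q) in L; [|lra].
    replace (q * (a * b * / q - 1)) with (a * b - q) in L by (field; lra). lra.
Qed.

Lemma joint_entropy_le {A B : Type} (QA : list A) (QB : list B)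
  (q : A -> B -> R) (a : A -> R) (b : B -> R) :
  (forall x y, In x QA -> In y QB -> 0 <= q x y) ->
  (forall x, In x QA -> sumL QB (q x) = a x) ->
  (forall y, In y QB -> sumL QA (fun x => q x y) = b y) ->
  sumL QA a = 1 -> sumL QB b = 1 ->
  sumL QA (fun x => sumL QB (fun y => eta (q x y))) <=
  sumL QA (fun x => eta (a x)) + sumL QB (fun y => eta (b y)).
Proof.
  intros Hpos Ha Hb Sa Sb.
  assert (Hqa : forall x y, In x QA -> In y QB -> q x y <= a x)
    by (intros x y Hx Hy; rewrite <- Ha by auto; apply sumL_term_le; auto).
  assert (Hqb : forall x y, In x QA -> In y QB -> q x y <= b y)
    by (intros x y Hx Hy; rewrite <- Hb by auto; apply (sumL_term_le QA (fun x => q x y)); auto).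
  eapply Rle_trans.
  { apply sumL_le; intros x Hx. apply sumL_le; intros y Hy.
    apply (eta_gibbs_pointwise _ (a x) (b y)); auto. }
  assert (Ea : forall x, In x QA -> sumL QB (fun y => - q x y * ln (a x)) = eta (a x)).
  { intros x Hx. rewrite eta_eq, (sumL_ext _ _ (fun y => - ln (a x) * q x y)) by (intros; ring).
    rewrite sumL_scal, Ha by auto. ring. }
  assert (Eb : sumL QA (fun x => sumL QB (fun y => - q x y * ln (b y))) =
               sumL QB (fun y => eta (b y))).
  { rewrite sumL_swap. apply sumL_ext; intros y Hy.
    rewrite eta_eq, (sumL_ext _ _ (fun x => - ln (b y) * q x y)) by (intros; ring).
    rewrite sumL_scal, Hb by auto. ring. }
  assert (Ec : forall x, In x QA -> sumL QB (fun y => a x * b y - q x y) = 0).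
  { intros x Hx. rewrite sumL_minus, sumL_scal, Sb, Ha by auto. ring. }
  rewrite (sumL_ext QA _ (fun x => sumL QB (fun y => - q x y * ln (a x)) +
             sumL QB (fun y => - q x y * ln (b y)) + sumL QB (fun y => a x * b y - q x y)))
    by (intros; rewrite <- !sumL_plus; apply sumL_ext; intros; ring).
  rewrite !sumL_plus, Eb, (sumL_ext QA _ (fun x => eta (a x))) by exact Ea.
  rewrite (sumL_ext QA (fun x => sumL QB (fun y => a x * b y - q x y)) (fun _ => 0))
    by exact Ec. rewrite sumL_zero. lra.
Qed.

Lemma entropy_join_subadditive {X : Type} S (mu : set X -> R) T P :
  probability_space S mu -> measure_preserving S mu T -> finite_measurable_partition S P ->
  forall m n,
  Hg mu eta (join_part T P (m + n)) <= Hg mu eta (join_part T P m) + Hg mu eta (join_part T P n).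
Proof.
  intros HP HT HF m n.
  pose proof (join_part_splits_measure S mu T P HP HT HF m) as [Mm Sm].
  pose proof (join_splits_measure S mu T P HP HT HF n m) as [Mn Sn].
  rewrite join_part_add, !Hg_sumL, sumL_refine.
  replace (sumL (join_part T P n) (fun A => eta (mu A))) with
    (sumL (map (preimage (iter_map m T)) (join_part T P n)) (fun A => eta (mu A))).
  2: { rewrite sumL_map. apply sumL_ext; intros B HB. f_equal.
       apply (iter_measure_preserving S mu T HT).
       apply (join_part_splits_measure S mu T P HP HT HF n); auto. }
  apply (joint_entropy_le _ _ (fun A B => mu (inter A B)) mu mu).
  - intros A B HA HB. apply (mu_nonneg S mu); auto. apply (meas_inter S mu); auto.
  - intros A HA. apply Sn; auto.
  - intros B HB. rewrite <- (Sm B) by auto. apply sumL_ext; intros A HA.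
    f_equal. apply set_ext; unfold inter; tauto.
  - apply (splits_measure_sum1 S mu); auto. split; auto.
  - apply (splits_measure_sum1 S mu); auto. split; auto.
Qed.

Lemma Rdiv_nonneg x y : 0 <= x -> 0 < y -> 0 <= x / y.
Proof. intros Hx Hy. unfold Rdiv. apply Rmult_le_pos; [exact Hx | left; apply Rinv_0_lt_compat, Hy]. Qed.

Lemma div_INR_eventually_small K e : 0 <= K -> 0 < e ->
  exists N, (0 < N)%nat /\ forall n, (N <= n)%nat -> K / INR n < e.
Proof.
  intros HK He. destruct (archimed_cor1 (e / (K + 1))) as [N [HN HN0]].
  { apply Rdiv_lt_0_compat; lra. }
  exists N. split; auto. intros n Hn.
  assert (Hinv : / INR n <= / INR N)
    by (apply Rinv_le_contravar; [apply lt_0_INR; lia | apply le_INR; lia]).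
  assert (K / INR n <= K * (e / (K + 1))) by (unfold Rdiv; apply Rmult_le_compat_l; lra).
  assert (K * (e / (K + 1)) < e).
  { replace (K * (e / (K + 1))) with (e - e / (K + 1)) by (field; lra).
    assert (0 < e / (K + 1)) by (apply Rdiv_lt_0_compat; lra). lra. }
  lra.
Qed.

Section Fekete.
Variable a : nat -> R.
Hypothesis a_nonneg : forall n, 0 <= a n.
Hypothesis a_subadditive : forall m n, a (m + n)%nat <= a m + a n.

Lemma subadditive_multiple q m r : a (q * m + r)%nat <= INR q * a m + a r.
Proof.
  induction q as [|q IH]; [simpl; lra|].
  replace (Datatypes.S q * m + r)%nat with (m + (q * m + r))%nat by lia.
  rewrite S_INR. pose proof (a_subadditive m (q * m + r)). lra.
Qed.

Lemma subadditive_ratio_bound m n : (1 <= m)%nat -> (1 <= n)%nat ->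
  a n / INR n <= a m / INR m + (a 0%nat + INR m * a 1%nat) / INR n.
Proof.
  intros Hm Hn.
  assert (HnR : 0 < INR n) by (apply lt_0_INR; lia).
  assert (HmR : 0 < INR m) by (apply lt_0_INR; lia).
  set (q := (n / m)%nat). set (r := (n mod m)%nat).
  assert (Hdiv : n = (q * m + r)%nat) by (unfold q, r; rewrite (Nat.div_mod n m) at 1 by lia; lia).
  assert (Hr : (r < m)%nat) by (apply Nat.mod_upper_bound; lia).
  assert (Hrest : a r <= a 0%nat + INR m * a 1%nat).
  { pose proof (subadditive_multiple r 1 0) as H.
    replace (r * 1 + 0)%nat with r in H by lia.
    assert (INR r * a 1%nat <= INR m * a 1%nat)
      by (apply Rmult_le_compat_r; [apply a_nonneg | apply le_INR; lia]).
    lra. }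
  assert (Hqm : INR q * INR m <= INR n) by (rewrite <- mult_INR; apply le_INR; lia).
  assert (Hmain : INR q * a m <= INR n * (a m / INR m)).
  { replace (INR q * a m) with (INR q * INR m * (a m / INR m)) by (field; lra).
    apply Rmult_le_compat_r; auto. apply Rdiv_nonneg; auto. }
  pose proof (subadditive_multiple q m r) as Hsplit. rewrite <- Hdiv in Hsplit.
  apply Rmult_le_reg_r with (r := INR n); auto.
  replace (a n / INR n * INR n) with (a n) by (field; lra).
  replace ((a m / INR m + (a 0%nat + INR m * a 1%nat) / INR n) * INR n)
    with (INR n * (a m / INR m) + (a 0%nat + INR m * a 1%nat)) by (field; lra).
  lra.
Qed.

Lemma fekete : exists L, Un_cv (fun n => a n / INR n) L.
Proof.
  set (E := fun y => exists n, (1 <= n)%nat /\ y = - (a n / INR n)).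
  assert (Hratio_nonneg : forall n, (1 <= n)%nat -> 0 <= a n / INR n)
    by (intros n Hn; apply Rdiv_nonneg; [apply a_nonneg | apply lt_0_INR; lia]).
  assert (HEbound : bound E) by (exists 0; intros y [n [Hn ->]]; pose proof (Hratio_nonneg n Hn); lra).
  assert (HEne : exists y, E y) by (exists (- (a 1%nat / INR 1)), 1%nat; auto).
  destruct (completeness E HEbound HEne) as [M [HMub HMleast]].
  (* [L = - M] is the infimum of the ratios. *)
  exists (- M). intros eps Heps.
  assert (Hinf : forall n, (1 <= n)%nat -> - M <= a n / INR n).
  { intros n Hn. assert (- (a n / INR n) <= M) by (apply HMub; exists n; auto). lra. }
  assert (Happrox : exists m, (1 <= m)%nat /\ a m / INR m < - M + eps / 2).
  { apply NNPP; intros Hno. assert (M <= M - eps / 2); [|lra].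
    apply HMleast. intros y [n [Hn ->]].
    destruct (Rlt_le_dec (a n / INR n) (- M + eps / 2)); [exfalso; eauto | lra]. }
  destruct Happrox as [m [Hm Hmeps]].
  assert (HC : 0 <= a 0%nat + INR m * a 1%nat)
    by (pose proof (a_nonneg 0); pose proof (a_nonneg 1); pose proof (pos_INR m); nra).
  destruct (div_INR_eventually_small _ (eps / 2) HC ltac:(lra)) as [N [HN HNsmall]].
  exists N. intros n Hn. unfold Rdist.
  pose proof (Hinf n ltac:(lia)).
  pose proof (subadditive_ratio_bound m n Hm ltac:(lia)).
  pose proof (HNsmall n Hn).
  rewrite Rabs_right; lra.
Qed.

End Fekete.

(** A concave [g] on [[0,1]] with [g 0 = 0] is bounded there: below by
    chord comparison with [g 1], above via the midpoint [1/2]. *)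
Lemma concave_bounded g : concave_on_01 g -> g 0 = 0 ->
  exists M, 0 <= M /\ forall x, 0 <= x <= 1 -> Rabs (g x) <= M.
Proof.
  intros Hc H0. exists (2 * Rabs (g (/ 2)) + Rabs (g 1)).
  split; [pose proof (Rabs_pos (g (/ 2))); pose proof (Rabs_pos (g 1)); lra|].
  intros x Hx.
  assert (Hchord : forall y, 0 <= y <= 1 -> y * g 1 <= g y).
  { intros y Hy. pose proof (Hc 1 0 y ltac:(lra) ltac:(lra) Hy) as H.
    replace (y * 1 + (1 - y) * 0) with y in H by ring. rewrite H0 in H. lra. }
  assert (Hmid : / 2 * g x + (1 - / 2) * g (1 - x) <= g (/ 2 * x + (1 - / 2) * (1 - x)))
    by (apply Hc; lra).
  replace (/ 2 * x + (1 - / 2) * (1 - x)) with (/ 2) in Hmid by field.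
  pose proof (Hchord x Hx). pose proof (Hchord (1 - x) ltac:(lra)).
  pose proof (Rle_abs (g (/ 2))). pose proof (Rabs_pos (g (/ 2))). pose proof (Rle_abs (g 1)).
  pose proof (Rle_abs (- g 1)). rewrite Rabs_Ropp in *.
  assert (x * g 1 >= - Rabs (g 1)) by (destruct (Rle_dec 0 (g 1)); nra).
  assert ((1 - x) * g 1 >= - Rabs (g 1)) by (destruct (Rle_dec 0 (g 1)); nra).
  apply Rabs_le. lra.
Qed.

(** If [g ~ c eta] at [0+], then on [[0,1]], [g] is [c eta] up to an error
    [eps eta x + K x]: the first term controls small [x], the second the
    (bounded) rest. *)
Lemma ratio_limit_approx g c : G0 g -> ratio_limit_at_0 g c ->
  forall eps, 0 < eps -> exists K, forall x, 0 <= x <= 1 ->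
    Rabs (g x - c * eta x) <= eps * eta x + K * x.
Proof.
  intros [Hconc [H0 _]] Hlim eps Heps.
  destruct (concave_bounded g Hconc H0) as [Mg [HMg0 HMg]].
  destruct (Hlim eps Heps) as [d [Hd Hdlim]].
  set (d' := Rmin d 1).
  assert (Hd' : 0 < d') by (apply Rmin_pos; lra).
  assert (Hd'1 : d' <= 1) by apply Rmin_r. assert (Hd'd : d' <= d) by apply Rmin_l.
  set (M := Mg + Rabs c).
  assert (HM : 0 <= M) by (unfold M; pose proof (Rabs_pos c); lra).
  exists (M / d'). intros x Hx.
  assert (Heta0 : 0 <= eta x) by (apply eta_nonneg; auto).
  assert (HKx : 0 <= M / d' * x) by (apply Rmult_le_pos; [apply Rdiv_nonneg|]; lra).
  assert (Heps_eta : 0 <= eps * eta x) by (apply Rmult_le_pos; lra).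
  destruct (Req_dec x 0) as [->|Hx0].
  { rewrite H0, eta_eq. replace (0 - c * (- 0 * ln 0)) with 0 by ring. rewrite Rabs_R0. lra. }
  destruct (Rlt_le_dec x d') as [Hsmall|Hlarge].
  - assert (Hpos : 0 < eta x) by (apply eta_pos; lra).
    specialize (Hdlim x ltac:(lra) ltac:(lra)).
    replace (g x - c * eta x) with ((g x / eta x - c) * eta x) by (field; lra).
    rewrite Rabs_mult, (Rabs_right (eta x)) by lra.
    assert (Rabs (g x / eta x - c) * eta x <= eps * eta x) by (apply Rmult_le_compat_r; lra).
    lra.
  - assert (Rabs (g x - c * eta x) <= M).
    { eapply Rle_trans; [apply Rabs_triang|]. rewrite Rabs_Ropp, Rabs_mult.
      pose proof (HMg x Hx). rewrite (Rabs_right (eta x)) by lra.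
      pose proof (eta_le1 x Hx). pose proof (Rabs_pos c).
      assert (Rabs c * eta x <= Rabs c) by nra. unfold M. lra. }
    assert (M <= M / d' * x).
    { replace (M / d' * x) with (M * (x / d')) by (field; lra).
      assert (1 <= x / d').
      { apply Rmult_le_reg_r with (r := d'); auto. replace (x / d' * d') with x by (field; lra). lra. }
      nra. }
    lra.
Qed.

(** Summing the pointwise approximation over a measure-splitting [Q]:
    [|H(g,Q) - c H(Q)| <= eps H(Q) + K], since the masses add up to 1. *)
Lemma Hg_approx {X : Type} S (mu : set X -> R) g c eps K Q :
  probability_space S mu -> splits_measure S mu Q ->
  (forall x, 0 <= x <= 1 -> Rabs (g x - c * eta x) <= eps * eta x + K * x) ->
  Rabs (Hg mu g Q - c * Hg mu eta Q) <= eps * Hg mu eta Q + K.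
Proof.
  intros HP HQ Happrox. rewrite !Hg_sumL, <- sumL_scal, <- sumL_minus.
  eapply Rle_trans; [apply sumL_abs|].
  eapply Rle_trans.
  { apply (sumL_le _ _ (fun A => eps * eta (mu A) + K * mu A)). intros B HB.
    apply Happrox, (splits_measure_mu01 S mu HP Q); auto. }
  rewrite sumL_plus, !sumL_scal, (splits_measure_sum1 S mu HP Q); auto. lra.
Qed.

Lemma cv_ratio_of_approx (a b : nat -> R) (c L : R) :
  Un_cv (fun n => a n / INR n) L ->
  (forall eps, 0 < eps -> exists K, forall n, Rabs (b n - c * a n) <= eps * a n + K) ->
  Un_cv (fun n => b n / INR n) (c * L).
Proof.
  intros Ha Happrox.
  assert (Herr : Un_cv (fun n => (b n - c * a n) / INR n) 0).
  { intros e He.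
    set (eps := e / (2 * (Rabs L + 1))).
    assert (Heps : 0 < eps) by (unfold eps; pose proof (Rabs_pos L); apply Rdiv_lt_0_compat; lra).
    destruct (Happrox eps Heps) as [K HK].
    destruct (Ha 1 Rlt_0_1) as [N1 HN1].
    destruct (div_INR_eventually_small (Rabs K) (e / 2) (Rabs_pos K) ltac:(lra))
      as [N2 [HN2 HN2small]].
    exists (max N1 N2). intros n Hn. unfold Rdist. rewrite Rminus_0_r.
    assert (HnR : 0 < INR n) by (apply lt_0_INR; lia).
    specialize (HN1 n ltac:(lia)). unfold Rdist in HN1. apply Rabs_def2 in HN1.
    specialize (HN2small n ltac:(lia)).
    assert (Hratio : eps * (a n / INR n) <= e / 2).
    { replace (e / 2) with (eps * (Rabs L + 1)) by (unfold eps; field; pose proof (Rabs_pos L); lra).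
      apply Rmult_le_compat_l; [lra|]. pose proof (Rle_abs L). lra. }
    unfold Rdiv at 1. rewrite Rabs_mult, (Rabs_right (/ INR n))
      by (left; apply Rinv_0_lt_compat; lra).
    assert (Rabs (b n - c * a n) * / INR n <= (eps * a n + K) * / INR n)
      by (apply Rmult_le_compat_r; [left; apply Rinv_0_lt_compat; lra | apply HK]).
    assert (K / INR n <= Rabs K / INR n)
      by (unfold Rdiv; apply Rmult_le_compat_r; [left; apply Rinv_0_lt_compat; lra | apply Rle_abs]).
    replace ((eps * a n + K) * / INR n) with (eps * (a n / INR n) + K / INR n) in * by (field; lra).
    lra. }
  apply Un_cv_ext with (fun n => c * (a n / INR n) + (b n - c * a n) / INR n).
  { intros n. unfold Rdiv. ring. }
  replace (c * L) with (c * L + 0) by ring.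
  apply CV_plus; [|exact Herr].
  apply CV_mult; [|exact Ha].
  intros e He. exists 0%nat. intros n _. unfold Rdist. rewrite Rminus_diag, Rabs_R0. exact He.
Qed.

Lemma Un_cv_is_limsup u l : Un_cv u l -> is_limsup u l.
Proof.
  intros H eps Heps. destruct (H eps Heps) as [N HN]. split.
  - exists N. intros n Hn. specialize (HN n Hn). unfold Rdist in HN. apply Rabs_def2 in HN. lra.
  - intros N'. exists (max N N'). split; [lia|].
    specialize (HN (max N N') ltac:(lia)). unfold Rdist in HN. apply Rabs_def2 in HN. lra.
Qed.

Theorem mainTheorem6 (X : Type) (S : set X -> Prop) (mu : set X -> R) (T : X -> X)
  (g : R -> R) (P : list (set X)) :
  probability_space S mu ->
  measure_preserving S mu T ->
  (G0_0 g \/ G0_sh g) ->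
  finite_measurable_partition S P ->
  exists h : R,
    is_limsup (fun n => Hg mu g (join_part T P n) / INR n) h /\
    Un_cv (fun n => Hg mu g (join_part T P n) / INR n) h.
Proof.
  intros HP HT Hclass HF.
  assert (Hg_eta : G0 g /\ exists c, ratio_limit_at_0 g c)
    by (destruct Hclass as [[H1 H2]|[H1 [c [_ H2]]]]; eauto).
  destruct Hg_eta as [HG [c Hc]].
  set (a := fun n => Hg mu eta (join_part T P n)).
  pose proof (join_part_splits_measure S mu T P HP HT HF) as Hsplit.
  assert (Ha_nonneg : forall n, 0 <= a n).
  { intros n. unfold a. rewrite Hg_sumL. apply sumL_nonneg; intros B HB.
    apply eta_nonneg, (splits_measure_mu01 S mu HP (join_part T P n)); auto. }
  destruct (fekete a Ha_nonneg (entropy_join_subadditive S mu T P HP HT HF)) as [L HL].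
  assert (Hcv : Un_cv (fun n => Hg mu g (join_part T P n) / INR n) (c * L)).
  { apply (cv_ratio_of_approx a); auto.
    intros eps Heps. destruct (ratio_limit_approx g c HG Hc eps Heps) as [K HK].
    exists K. intros n. apply (Hg_approx S mu); auto. }
  exists (c * L). split; [apply Un_cv_is_limsup|]; exact Hcv.
Qed.
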